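(* Under the model and the scheme described in the context, for every $t\ge 1$, $$I\big(X_0;\,Q_t \,\big|\, (Q_i)_{i\le t-1}\big)=0.$$ Together with Claim 1 this gives $I\big((X_i)_{i\le 0};Q_t\mid (Q_i)_{i\le t-1}\big)=0$ for all $t\ge1$, i.e. the scheme satisfies the privacy constraint for the step privacy mode ($\mathrm{ON}$ for $t\le 0$, $\mathrm{OFF}$ for $t\ge1$).
   Context: Model. Fix $\alpha,\beta\in[0,1]$. The user's requests $\{X_t\}_{t\in\mathbb{Z}}$ form a time-homogeneous Markov chain on $\{A,B\}$ with $\Pr(X_{t+1}=B\mid X_t=A)=\alpha$ and $\Pr(X_{t+1}=A\mid X_t=B)=\beta$, and $0<\Pr(X_t=A)<1$ for every $t$. The user has mutually independent local randomness $\{S_t\}_{t\in\mathbb{Z}}$, independent of $\{X_t\}$. Scheme. Queries take values in $\{A,B,AB\}$. For $t\le 0$, $Q_t=AB$. For $t\ge1$, $Q_t$ is generated from $(X_0,X_t,Q_{t-1})$ and fresh randomness $S_t$ (so that, given $(X_0,X_t,Q_{t-1})$, $Q_t$ is conditionally independent of all other requests and queries) as follows. If $Q_{t-1}\in\{A,B\}$ then $Q_t=X_t$. If $Q_{t-1}=AB$, then the conditional law of $Q_t$ given $(X_0,X_t)$ is: (i) if $\alpha+\beta<1$: for $(X_0,X_t)=(A,A)$, $Q_t=A$ w.p. $\beta/(1-\alpha)$ and $Q_t=AB$ w.p. $(1-\alpha-\beta)/(1-\alpha)$; for $(A,B)$, $Q_t=B$; for $(B,A)$, $Q_t=A$; for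 $(B,B)$, $Q_t=B$ w.p. $\alpha/(1-\beta)$ and $Q_t=AB$ w.p. $(1-\alpha-\beta)/(1-\beta)$; (ii) if $\alpha+\beta=1$: $Q_t=X_t$; (iii) if $\alpha+\beta>1$ and $t$ even: for $(A,A)$, $Q_t=A$ w.p. $(1-\alpha)/\beta$ and $AB$ w.p. $(\alpha+\beta-1)/\beta$; for $(A,B)$, $Q_t=B$; for $(B,A)$, $Q_t=A$; for $(B,B)$, $Q_t=B$ w.p. $(1-\beta)/\alpha$ and $AB$ w.p. $(\alpha+\beta-1)/\alpha$; (iv) if $\alpha+\beta>1$ and $t$ odd: for $(A,A)$, $Q_t=A$; for $(A,B)$, $Q_t=B$ w.p. $(1-\beta)/\alpha$ and $AB$ w.p. $(\alpha+\beta-1)/\alpha$; for $(B,A)$, $Q_t=A$ w.p. $(1-\alpha)/\beta$ and $AB$ w.p. $(\alpha+\beta-1)/\beta$; for $(B,B)$, $Q_t=B$. *)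

From Stdlib Require Import Reals List ZArith Arith.
Open Scope R_scope.
Import ListNotations.

Inductive req := rA | rB.
Inductive qry := qA | qB | qAB.

Definition qry_of_req (x : req) : qry := match x with rA => qA | rB => qB end.
Definition qeq (q1 q2 : qry) : bool :=
  match q1, q2 with qA,qA | qB,qB | qAB,qAB => true | _,_ => false end.
Definition ind (b : bool) : R := if b then 1 else 0.

(* Markov transition kernel: P(X_{t+1}=y | X_t=x). *)
Definition trans (a b : R) (x y : req) : R :=
  match x, y with
  | rA, rA => 1 - a | rA, rB => a
  | rB, rA => b     | rB, rB => 1 - b
  end.

(* Law of Q_t given (X_0, X_t, Q_{t-1}), for t >= 1, exactly as in the scheme. *)
Definition kern (a b : R) (t : nat) (x0 xt : req) (qprev q : qry) : R :=
  match qprev with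
  | qA | qB => ind (qeq q (qry_of_req xt))
  | qAB =>
    if Rlt_dec (a + b) 1 then
      match x0, xt with
      | rA, rA => match q with qA => b / (1 - a) | qAB => (1 - a - b) / (1 - a) | qB => 0 end
      | rA, rB => ind (qeq q qB)
      | rB, rA => ind (qeq q qA)
      | rB, rB => match q with qB => a / (1 - b) | qAB => (1 - a - b) / (1 - b) | qA => 0 end
      end
    else if Rlt_dec 1 (a + b) then
      if Nat.even t then
        match x0, xt with
        | rA, rA => match q with qA => (1 - a) / b | qAB => (a + b - 1) / b | qB => 0 end
        | rA, rB => ind (qeq q qB)
        | rB, rA => ind (qeq q qA)
        | rB, rB => match q with qB => (1 - b) / a | qAB => (a + b - 1) / a | qA => 0 end
        end
      else
        match x0, xt with
        | rA, rA => ind (qeq q qA)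
        | rA, rB => match q with qB => (1 - b) / a | qAB => (a + b - 1) / a | qA => 0 end
        | rB, rA => match q with qA => (1 - a) / b | qAB => (a + b - 1) / b | qB => 0 end
        | rB, rB => ind (qeq q qB)
        end
    else ind (qeq q (qry_of_req xt))
  end.

Definition sumR {T} (l : list T) (f : T -> R) : R := fold_right Rplus 0 (map f l).

Definition all_req : list req := [rA; rB].
Definition all_qry : list qry := [qA; qB; qAB].

Fixpoint seqs {T} (alph : list T) (n : nat) : list (list T) :=
  match n with
  | O => [[]]
  | S n => flat_map (fun s => map (fun x => x :: s) alph) (seqs alph n)
  end.

Definition pX0 (p0 : R) (x : req) : R := match x with rA => p0 | rB => 1 - p0 end.

(* Weight of the steps i = k+1, ..., k+length xs, given X_k = xprev, Q_k = qprev,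
   X_0 = x0; xs = [X_{k+1};...], qs = [Q_{k+1};...]. *)
Fixpoint steps (a b : R) (k : nat) (x0 xprev : req) (qprev : qry)
         (xs : list req) (qs : list qry) : R :=
  match xs, qs with
  | x :: xs', q :: qs' =>
      trans a b xprev x * kern a b (S k) x0 x qprev q *
      steps a b (S k) x0 x q xs' qs'
  | [], [] => 1
  | _, _ => 0
  end.

(* Joint pmf of (X_0, X_1..X_t, Q_1..Q_t); Q_i = AB for i <= 0 (so Q_0 = AB). *)
Definition joint (a b p0 : R) (x0 : req) (xs : list req) (qs : list qry) : R :=
  pX0 p0 x0 * steps a b 0 x0 x0 qAB xs qs.

Definition pXQ (a b p0 : R) (x0 : req) (qs : list qry) : R :=
  sumR (seqs all_req (length qs)) (fun xs => joint a b p0 x0 xs qs).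

(* Conditional mutual information (natural log, 0 log 0 = 0)
   I(X_0 ; Q_t | Q_1..Q_{t-1}) where t = n + 1.  The queries Q_i, i <= 0,
   are the constant AB and are omitted from the conditioning (conditioning on
   a constant changes nothing). *)
Definition cmi (a b p0 : R) (n : nat) : R :=
  let pxh x0 h := sumR all_qry (fun q => pXQ a b p0 x0 (h ++ [q])) in
  let ph h := sumR all_req (fun x0 => pxh x0 h) in
  let phq h q := sumR all_req (fun x0 => pXQ a b p0 x0 (h ++ [q])) in
  sumR all_req (fun x0 => sumR (seqs all_qry n) (fun h => sumR all_qry (fun q =>
    let pj := pXQ a b p0 x0 (h ++ [q]) in
    if Req_EM_T pj 0 then 0
    else pj * ln (pj * ph h / (pxh x0 h * phq h q))))).

From Pilot Require Import Defs.
From Stdlib Require Import Reals ZArith List Lra.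
Open Scope R_scope.
Import ListNotations.

(* Let W k x0 x q qs be the total weight, summed over all request
   paths, of the queries qs being issued at steps k+1, k+2, ... when the chain is
   at X_k = x, the previous query is Q_k = q, and the initial request is x0.
   Then pXQ x0 qs = Pr(X_0 = x0) * W 0 x0 x0 AB qs.
   1. Once a query is disclosed (Q_k <> AB), every later query copies the
      request, so W no longer depends on k, x0 or Q_k.
   2. While Q_k = AB, the scheme is calibrated so that the one-step weights
      starting from (X_0, X_k) = (A, A) and (B, B) coincide (cases (i), (ii));
      when a + b > 1 this holds for (A, A)/(B, B) at even k and (A, B)/(B, A)
      at odd k, which an induction on qs carries along (cases (iii), (iv)).
   Hence W 0 A A AB = W 0 B B AB, so X_0 is independent of (Q_1, ..., Q_t), and
   a product law makes every logarithm in the conditional mutual information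
   vanish, whatever the length of the history. *)

Lemma sumR_app {T} (l1 l2 : list T) (f : T -> R) :
  sumR (l1 ++ l2) f = sumR l1 f + sumR l2 f.
Proof. induction l1; unfold sumR in *; simpl; try rewrite IHl1; ring. Qed.

Lemma sumR_flat_map {T U} (l : list T) (h : T -> list U) (g : U -> R) :
  sumR (flat_map h l) g = sumR l (fun s => sumR (h s) g).
Proof. induction l; simpl; [reflexivity|]. rewrite sumR_app, IHl. reflexivity. Qed.

Lemma sumR_plus {T} (l : list T) (f g : T -> R) :
  sumR l (fun x => f x + g x) = sumR l f + sumR l g.
Proof. induction l; unfold sumR in *; simpl; [ring|]. rewrite IHl; ring. Qed.

Lemma sumR_scal {T} (l : list T) (c : R) (f : T -> R) :
  sumR l (fun x => c * f x) = c * sumR l f.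
Proof. induction l; unfold sumR in *; simpl; [ring|]. rewrite IHl; ring. Qed.

Lemma sumR_ext {T} (l : list T) (f g : T -> R) :
  (forall x, f x = g x) -> sumR l f = sumR l g.
Proof. intro H; induction l; unfold sumR in *; simpl; [ring|]. rewrite IHl, H; ring. Qed.

Lemma sumR_zero {T} (l : list T) (f : T -> R) : (forall x, f x = 0) -> sumR l f = 0.
Proof. intro H; induction l; unfold sumR in *; simpl; [ring|]. rewrite IHl, H; ring. Qed.

(* A logarithm of a ratio whose numerator equals its (nonzero) denominator is 0;
   with Stdlib's conventions 1/0 = 0 and ln 0 = 0 the zero case is also fine. *)
Lemma ln_ratio_eq (N D : R) : (D <> 0 -> N = D) -> ln (N / D) = 0.
Proof.
  intro HND. destruct (Req_EM_T D 0) as [->|HD].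
  - unfold Rdiv. rewrite Rinv_0, Rmult_0_r. unfold ln.
    case Rlt_dec; intro H0; [exfalso; lra|reflexivity].
  - rewrite (HND HD), Rdiv_diag by exact HD. apply ln_1.
Qed.

Lemma cmi_zero_of_product (a b p0 : R) (f : req -> R) (g : list qry -> R) :
  (forall x0 qs, pXQ a b p0 x0 qs = f x0 * g qs) -> forall n, cmi a b p0 n = 0.
Proof.
  intros Hprod n. unfold cmi.
  apply sumR_zero; intro x0. apply sumR_zero; intro h. apply sumR_zero; intro q.
  cbv zeta. unfold all_req, all_qry, sumR. cbn [map fold_right].
  rewrite !Hprod.
  destruct (Req_EM_T _ _); [reflexivity|].
  rewrite ln_ratio_eq; [ring|]. intros _. ring.
Qed.

Section QueryWeights.
Variables a b : R.

Definition query_weight (k : nat) (x0 x : req) (q : qry) (qs : list qry) : R :=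
  sumR (seqs all_req (length qs)) (fun xs => steps a b k x0 x q xs qs).

Lemma query_weight_nil k x0 x q : query_weight k x0 x q [] = 1.
Proof. unfold query_weight, sumR; simpl. ring. Qed.

Lemma query_weight_cons k x0 x q q' qs :
  query_weight k x0 x q (q' :: qs) =
    trans a b x rA * kern a b (S k) x0 rA q q' * query_weight (S k) x0 rA q' qs +
    trans a b x rB * kern a b (S k) x0 rB q q' * query_weight (S k) x0 rB q' qs.
Proof.
  unfold query_weight. simpl length. simpl seqs.
  rewrite sumR_flat_map, <- !sumR_scal, <- sumR_plus.
  apply sumR_ext; intro s. unfold sumR; simpl. ring.
Qed.

Lemma kern_disclosed t x0 x q q' :
  q <> qAB -> kern a b t x0 x q q' = Defs.ind (qeq q' (qry_of_req x)).
Proof. intro Hq. destruct q; [reflexivity|reflexivity|congruence]. Qed.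

Definition released_weight (x : req) (qs : list qry) : R := query_weight 0 rA x qA qs.

Lemma query_weight_disclosed qs : forall k x0 x q,
  q <> qAB -> query_weight k x0 x q qs = released_weight x qs.
Proof.
  unfold released_weight.
  induction qs as [|q' qs IH]; intros k x0 x q Hq.
  - rewrite !query_weight_nil. reflexivity.
  - rewrite !query_weight_cons, !kern_disclosed by (congruence || discriminate).
    destruct q'; cbn [Defs.ind qeq qry_of_req].
    + rewrite (IH (S k) x0 rA qA), (IH 1%nat rA rA qA) by discriminate. ring.
    + rewrite (IH (S k) x0 rB qB), (IH 1%nat rA rB qB) by discriminate. ring.
    + ring.
Qed.

Lemma query_weight_after_A k x0 x qs :
  query_weight k x0 x qA qs = released_weight x qs.
Proof. apply query_weight_disclosed. discriminate. Qed.

Lemma query_weight_after_B k x0 x qs :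
  query_weight k x0 x qB qs = released_weight x qs.
Proof. apply query_weight_disclosed. discriminate. Qed.

Hypothesis ha : 0 <= a <= 1.
Hypothesis hb : 0 <= b <= 1.

Lemma weight_indep_positive (hab : a + b < 1) qs : forall k,
  query_weight k rA rA qAB qs = query_weight k rB rB qAB qs.
Proof.
  assert (1 - a <> 0) by lra. assert (1 - b <> 0) by lra.
  induction qs as [|q qs IH]; intro k.
  - rewrite !query_weight_nil. reflexivity.
  - rewrite !query_weight_cons. unfold kern.
    destruct (Rlt_dec (a + b) 1); [|lra]. simpl trans.
    destruct q; cbn [Defs.ind qeq];
      rewrite ?query_weight_after_A, ?query_weight_after_B, ?IH; field; auto.
Qed.

(* The request at time k that is "aligned" with x when a + b > 1: the chain
   tends to alternate, so the aligned state flips with the parity of k. *)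
Definition flip (x : req) : req := match x with rA => rB | rB => rA end.
Definition aligned (k : nat) (x : req) : req := if Nat.even k then x else flip x.

Lemma weight_indep_negative (hab : 1 < a + b) qs : forall k,
  query_weight k rA (aligned k rA) qAB qs = query_weight k rB (aligned k rB) qAB qs.
Proof.
  assert (a <> 0) by lra. assert (b <> 0) by lra.
  induction qs as [|q qs IH]; intro k.
  - rewrite !query_weight_nil. reflexivity.
  - rewrite !query_weight_cons. unfold kern.
    destruct (Rlt_dec (a + b) 1); [lra|]. destruct (Rlt_dec 1 (a + b)); [|lra].
    specialize (IH (S k)). unfold aligned in *. rewrite Nat.even_succ, <- Nat.negb_even in *.
    destruct (Nat.even k); cbn [negb flip trans] in IH |- *; destruct q; cbn [Defs.ind qeq];
      rewrite ?query_weight_after_A, ?query_weight_after_B, ?IH; field; auto.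
Qed.

(* Case (ii), a + b = 1: the first query always discloses the request, whose
   law (1 - a, a) = (b, 1 - b) does not depend on X_0. *)
Lemma weight_indep_critical (hab : a + b = 1) qs :
  query_weight 0 rA rA qAB qs = query_weight 0 rB rB qAB qs.
Proof.
  destruct qs as [|q qs]; [rewrite !query_weight_nil; reflexivity|].
  rewrite !query_weight_cons. unfold kern.
  destruct (Rlt_dec (a + b) 1); [lra|]. destruct (Rlt_dec 1 (a + b)); [lra|].
  simpl trans. replace b with (1 - a) by lra.
  destruct q; cbn [Defs.ind qeq qry_of_req];
    rewrite ?query_weight_after_A, ?query_weight_after_B; ring.
Qed.

Lemma weight_indep_x0 qs : query_weight 0 rA rA qAB qs = query_weight 0 rB rB qAB qs.
Proof.
  destruct (Rlt_dec (a + b) 1) as [h|h]; [exact (weight_indep_positive h qs 0)|].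
  destruct (Rlt_dec 1 (a + b)) as [h'|h']; [exact (weight_indep_negative h' qs 0)|].
  apply weight_indep_critical. lra.
Qed.

Lemma pXQ_product p0 x0 qs :
  pXQ a b p0 x0 qs = pX0 p0 x0 * query_weight 0 rA rA qAB qs.
Proof.
  unfold pXQ, joint. rewrite sumR_scal. fold (query_weight 0 x0 x0 qAB qs).
  destruct x0; [reflexivity|]. rewrite weight_indep_x0. reflexivity.
Qed.

End QueryWeights.

Theorem claim2 (a b : R) (p : Z -> R)
  (ha : 0 <= a <= 1) (hb : 0 <= b <= 1)
  (hrec : forall t : Z, p (t + 1)%Z = p t * (1 - a) + (1 - p t) * b)
  (hp : forall t : Z, 0 < p t < 1) :
  forall t : nat, (1 <= t)%nat -> cmi a b (p 0%Z) (t - 1) = 0.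
Proof.
  intros t _.
  apply (cmi_zero_of_product a b (p 0%Z) (pX0 (p 0%Z)) (query_weight a b 0 rA rA qAB)).
  intros x0 qs. exact (pXQ_product a b ha hb (p 0%Z) x0 qs).
Qed.
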